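(* Let $N=(G=(V,E),\sigma,u,s)$ be a skew-symmetric network with $m=|E|$, and let $f$ be an IS-flow in $N$. Then $f$ has a symmetric decomposition consisting of at most $m$ elementary flows.
   Context: A skew-symmetric graph is a finite directed graph $G=(V,E)$ (parallel arcs allowed) with a map $\sigma$ of $V\cup E$ onto itself such that $\sigma(x)\ne x$, $\sigma(\sigma(x))=x$ for all $x$, $\sigma(V)=V$, and for each arc $a$ from $v$ to $w$, $\sigma(a)$ is an arc from $\sigma(w)$ to $\sigma(v)$; write $x'=\sigma(x)$. The map $\sigma$ extends to paths: $\sigma(P)$ consists of the mates of the elements of $P$ in reverse order. A function $h$ on $E$ is symmetric if $h(a)=h(\sigma(a))$ for all $a$. A skew-symmetric network is $N=(G,\sigma,u,s)$ with $u:E\to\mathbb Z_{\ge0}$ symmetric and a source $s\in V$; $s'=\sigma(s)$ is the sink. A flow is $f:E\to\mathbb R_{\ge 0}$ with $f(a)\le u(a)$ for all $a$ and $\mathrm{div}_f(x):=\sum_{a\text{ leaving }x}f(a)-\sum_{a\text{ entering }x}f(a)=0$ for all $x\in V\setminus\{s,s'\}$; its value is $|f|=\mathrm{div}_f(s)$. An IS-flow is an integer-valued symmetric flow. For a path or cycle $P$, $\chi^P\in\mathbb R^E$ is the incidence vector of its arc set. An elementary flow is an IS-flow in $N$ of the form $g=\delta\chi^P+\delta\chi^{P'}$, where $P$ is a simple cycle, or a simple path from $s$ to $s'$, or a simple path from $s'$ to $s$, $P'=\sigma(P)$, and $\delta$ is a positive integer. A symmetric decomposition of $f$ is a set $D$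 of elementary flows with $f=\sum_{g\in D}g$. *)

From mathcomp Require Import all_boot.
Set Implicit Arguments. Unset Strict Implicit. Unset Printing Implicit Defensive.

(* A skew-symmetric graph: finite digraph (parallel arcs allowed), arc a goes
   from [tail a] to [head a]; [sigV]/[sigE] is the map sigma on V and on E. *)
Record skew_graph := SkewGraph {
  sg_V : finType;
  sg_E : finType;
  tail : sg_E -> sg_V;
  head : sg_E -> sg_V;
  sigV : sg_V -> sg_V;
  sigE : sg_E -> sg_E;
  sigV_invol : forall v, sigV (sigV v) = v;
  sigE_invol : forall a, sigE (sigE a) = a;
  sigV_nofix : forall v, sigV v != v;
  sigE_nofix : forall a, sigE a != a;
  tail_sigE : forall a, tail (sigE a) = sigV (head a);
  head_sigE : forall a, head (sigE a) = sigV (tail a)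
}.

Section Defs.
Variable G : skew_graph.
Local Notation V := (sg_V G).
Local Notation E := (sg_E G).

Definition symmetric_fun (h : E -> nat) : Prop := forall a, h (sigE a) = h a.

(* A flow (integer-valued, hence nat-valued since nonnegative) in the
   network (G, sigma, u, s) with sink s' = sigV s. *)
Definition is_flow (u : E -> nat) (s : V) (f : E -> nat) : Prop :=
  (forall a, f a <= u a) /\
  (forall x : V, x != s -> x != sigV s ->
     \sum_(a | tail a == x) f a = \sum_(a | head a == x) f a).

Definition is_ISflow (u : E -> nat) (s : V) (f : E -> nat) : Prop :=
  is_flow u s f /\ symmetric_fun f.

Fixpoint walk (x : V) (P : seq E) : bool :=
  match P with
  | [::] => true
  | a :: P' => (tail a == x) && walk (head a) P'
  end.

Definition simple_path (x y : V) (P : seq E) : bool :=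
  [&& walk x P, last x (map (@head G) P) == y & uniq (x :: map (@head G) P)].

Definition simple_cycle (P : seq E) : bool :=
  match P with
  | [::] => false
  | a :: _ => [&& walk (tail a) P, last (tail a) (map (@head G) P) == tail a
                 & uniq (map (@head G) P)]
  end.

Definition sig_path (P : seq E) : seq E := rev (map (@sigE G) P).

Definition chi (P : seq E) (a : E) : nat := (a \in P).

Definition elementary_flow (u : E -> nat) (s : V) (g : E -> nat) : Prop :=
  exists (delta : nat) (P : seq E),
    0 < delta /\
    (simple_cycle P \/ simple_path s (sigV s) P \/ simple_path (sigV s) s P) /\
    (forall a, g a = delta * chi P a + delta * chi (sig_path P) a) /\
    is_ISflow u s g.

End Defs.

From Pilot Require Import Defs.
From mathcomp Require Import all_boot.
From mathcomp Require Import zify.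
Set Implicit Arguments. Unset Strict Implicit. Unset Printing Implicit Defensive.

(* Write the IS-flow f as f = h + h o sigma with h an integer flow that need not
   be symmetric: h is f/2 rounded down, plus 1 on one arc of each pair {a, sigma a}
   of odd arcs.  Which arc gets the extra unit is read off an Eulerian orientation
   of the multigraph on the pairs {v, sigma v} whose edges are these pairs of odd
   arcs; conservation of f makes every degree there even, except at {s, s'}.
   Then decompose h greedily: a positive arc of h lies on a cycle or on an s-s'
   or s'-s path P of positive arcs, and subtracting d chi^P, with d the least
   value of h on P, empties an arc of the support of h while removing the
   elementary flow d chi^P + d chi^P' from f.  Equal elementary flows are finally
   merged into their sum, which is again elementary since it is at most f <= u. *)

Section EulerOrientation.
Variables (T : eqType) (L : finType) (S : pred T).
Implicit Types (A : {set L}) (x y : L -> T) (o : L -> bool).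

Definition orient x y o l := if o l then x l else y l.

Definition degree A x y v := \sum_(l in A) ((x l == v) + (y l == v)).

Definition balanced A x y :=
  forall v, ~~ S v -> \sum_(l in A) (x l == v) = \sum_(l in A) (y l == v).

Definition even_degrees A x y := forall v, ~~ S v -> ~~ odd (degree A x y v).

Lemma degree_orient A x y o v : degree A (orient x y o) (orient y x o) v = degree A x y v.
Proof. by apply: eq_bigr => l _; rewrite /orient; case: (o l); rewrite // addnC. Qed.

Lemma orient_orient x y o1 o2 l :
  orient (orient x y o1) (orient y x o1) o2 l = orient x y (fun k => o1 k == o2 k) l.
Proof. by rewrite /orient; case: (o1 l); case: (o2 l). Qed.

Lemma balanced_orient_orient A x y o1 :
  (exists o, balanced A (orient (orient x y o1) (orient y x o1) o)
                        (orient (orient y x o1) (orient x y o1) o)) ->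
  exists o, balanced A (orient x y o) (orient y x o).
Proof.
case=> o bal; exists (fun l => o1 l == o l) => v Sv; have := bal v Sv.
by congr (_ = _); apply: eq_bigr => l _; rewrite orient_orient.
Qed.

Lemma balanced_setD1_neutral A x y o l0 : l0 \in A ->
  (forall v, ~~ S v -> (x l0 == v) = (y l0 == v)) ->
  balanced (A :\ l0) (orient x y o) (orient y x o) ->
  balanced A (orient x y o) (orient y x o).
Proof.
move=> l0A neutral bal v Sv.
by rewrite !(big_setD1 l0 l0A) /= bal // /orient; case: (o l0); rewrite neutral.
Qed.

Lemma even_degrees_setD1_neutral A x y l0 : l0 \in A ->
  (forall v, ~~ S v -> (x l0 == v) = (y l0 == v)) ->
  even_degrees A x y -> even_degrees (A :\ l0) x y.
Proof.
move=> l0A neutral even v Sv; have := even v Sv.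
by rewrite /degree (big_setD1 l0 l0A) /= neutral // addnn oddD odd_double.
Qed.

(* Two edges [l0 = (w, y0)] and [l1 = (w, y1)] sharing the endpoint [w] are
   replaced by the single edge [(y1, y0)], stored at [l0]. *)
Section Contraction.
Variables (A : {set L}) (x y : L -> T) (l0 l1 : L).
Hypotheses (l0A : l0 \in A) (l1A : l1 \in A) (l10 : l1 != l0) (x10 : x l1 = x l0).

Let x' l := if l == l0 then y l1 else x l.
Let l0A1 : l0 \in A :\ l1. Proof. by rewrite in_setD1 eq_sym l10. Qed.

Lemma sum_contract (F : L -> nat) :
  \sum_(l in A) F l = F l1 + (F l0 + \sum_(l in A :\ l1 :\ l0) F l).
Proof. by rewrite (big_setD1 l1 l1A) (big_setD1 l0 l0A1). Qed.

Lemma contract_rest l : l \in A :\ l1 :\ l0 -> x' l = x l.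
Proof. by rewrite in_setD1 /x' => /andP[/negbTE ->]. Qed.

Lemma even_degrees_contract : even_degrees A x y -> even_degrees (A :\ l1) x' y.
Proof.
move=> even v Sv; rewrite /degree (big_setD1 l0 l0A1) /=.
rewrite (eq_bigr (fun l => (x l == v) + (y l == v))) => [|l /contract_rest ->] //.
have := even v Sv; rewrite /degree sum_contract /x' eqxx x10.
move: (x l0 == v : nat) (y l1 == v : nat) (y l0 == v : nat) (\sum_(l in _) _) => a b c R.
have -> : a + b + (a + c + R) = b + c + R + a.*2 by rewrite -addnn; lia.
by rewrite oddD odd_double addbF.
Qed.

Lemma balanced_contract o :
  balanced (A :\ l1) (orient x' y o) (orient y x' o) ->
  balanced A (orient x y (fun l => if l == l1 then ~~ o l0 else o l))
             (orient y x (fun l => if l == l1 then ~~ o l0 else o l)).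
Proof.
set o' := fun l => _; move=> bal v Sv; have := bal v Sv.
have rest l : l \in A :\ l1 :\ l0 -> x' l = x l /\ o' l = o l.
  move=> ll; split; first exact: contract_rest.
  by move: ll; rewrite !in_setD1 /o' => /and3P[_ /negbTE ->].
have [Ex Ey] : \sum_(l in A :\ l1 :\ l0) (orient x' y o l == v) =
                 \sum_(l in A :\ l1 :\ l0) (orient x y o' l == v) /\
               \sum_(l in A :\ l1 :\ l0) (orient y x' o l == v) =
                 \sum_(l in A :\ l1 :\ l0) (orient y x o' l == v).
  by split; apply: eq_bigr => l /rest[]; rewrite /orient => -> ->.
rewrite !(big_setD1 l0 l0A1) !sum_contract /= Ex Ey.
have l01 : (l0 == l1) = false by rewrite eq_sym (negbTE l10).
have [o'1 o'0] : o' l1 = ~~ o l0 /\ o' l0 = o l0 by rewrite /o' eqxx l01.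
rewrite /orient o'1 o'0 /x' eqxx x10.
by case: (o l0) => /=; lia.
Qed.

End Contraction.

Lemma even_degrees_next_edge A x y l0 w : even_degrees A x y -> l0 \in A -> ~~ S w ->
  (x l0 == w) (+) (y l0 == w) -> exists2 l1, l1 \in A :\ l0 & (x l1 == w) || (y l1 == w).
Proof.
move=> even l0A Sw xyw; apply/exists_inP; apply: contraLR (even w Sw) => /exists_inPn none.
rewrite /degree (big_setD1 l0 l0A) big1 => [|l /none]; last by case: eqP; case: eqP.
by move: xyw; case: eqP; case: eqP.
Qed.

Lemma balanced_orientation A x y :
  even_degrees A x y -> exists o, balanced A (orient x y o) (orient y x o).
Proof.
move: {2}#|A|.+1 (ltnSn #|A|) => n; elim: n A x y => // n IH A x y cardA even.
have [->|[l0 l0A]] := set_0Vmem A; first by exists xpredT => v _; rewrite !big_set0.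
have cardA0 : #|A :\ l0| < n by move: cardA; rewrite (cardsD1 l0) l0A.
have [neutral|] := boolP ((x l0 == y l0) || S (x l0) && S (y l0)).
  have {}neutral v : ~~ S v -> (x l0 == v) = (y l0 == v).
    move=> Sv; case/orP: neutral => [/eqP -> //|/andP[Sx Sy]].
    have notv t : S t -> (t == v) = false by move=> St; apply: contraNF Sv => /eqP <-.
    by rewrite !notv.
  have [o bal] := IH _ x y cardA0 (even_degrees_setD1_neutral l0A neutral even).
  by exists o; apply: balanced_setD1_neutral l0A neutral bal.
rewrite negb_or negb_and => /andP[xy0 Sxy0].
have [w Sw xyw] : exists2 w, ~~ S w & (x l0 == w) (+) (y l0 == w).
  case/orP: Sxy0 => [Sx|Sy]; [exists (x l0) | exists (y l0)] => //.
    by rewrite eqxx eq_sym (negbTE xy0).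
  by rewrite eqxx (negbTE xy0).
have [l1 l1A l1w] := even_degrees_next_edge even l0A Sw xyw.
have [l10 l1A'] : l1 != l0 /\ l1 \in A by apply/andP; rewrite -in_setD1.
(* Reorient [l0] and [l1] so that both start at [w], then contract them. *)
pose o1 l := if l == l0 then x l0 == w else if l == l1 then x l1 == w else true.
apply: (@balanced_orient_orient A x y o1).
set x1 := orient x y o1; set y1 := orient y x o1.
have [x1w0 x1w1] : x1 l0 = w /\ x1 l1 = w.
  rewrite /x1 /orient /o1 eqxx (negbTE l10) eqxx.
  have pick_w t t' : (t == w) || (t' == w) -> (if t == w then t else t') = w.
    by case: eqP => // _ /eqP.
  by rewrite !pick_w //; move: xyw; case: (x l0 == w).
have even1 : even_degrees A x1 y1 by move=> v Sv; rewrite degree_orient; apply: even.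
have x10 : x1 l1 = x1 l0 by rewrite x1w0 x1w1.
have cardA1 : #|A :\ l1| < n by move: cardA; rewrite (cardsD1 l1) l1A'.
have [o bal] := IH _ _ _ cardA1 (even_degrees_contract l0A l1A' l10 x10 even1).
by eexists; apply: balanced_contract bal.
Qed.

End EulerOrientation.

Lemma sum_nat_cond_swap (T : finType) (P Q : pred T) :
  \sum_(b | P b) (Q b : nat) = \sum_(b | Q b) (P b : nat).
Proof.
by rewrite big_mkcond [RHS]big_mkcond; apply: eq_bigr => b _; case: (P b); case: (Q b).
Qed.

Lemma odd_sum (T : finType) (P : pred T) (f : T -> nat) :
  odd (\sum_(b | P b) f b) = odd (\sum_(b | P b) odd (f b)).
Proof.
rewrite !(big_morph odd oddD (erefl (odd 0))).
by apply: eq_bigr => b _; rewrite oddb.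
Qed.

Section Halving.
Variables (T : finType) (f : T -> nat) (up : pred T).

Definition halve b := (f b)./2 + (odd (f b) && up b).

Lemma double_sum_halve (P : pred T) :
  (\sum_(b | P b) halve b).*2 + \sum_(b | P b) (odd (f b) && ~~ up b) =
  \sum_(b | P b) f b + \sum_(b | P b) (odd (f b) && up b).
Proof.
rewrite -muln2 big_distrl -!big_split; apply: eq_bigr => b _ /=.
by have := odd_double_half (f b); rewrite /halve; case: (odd _); case: (up b) => /=; lia.
Qed.

Lemma halve_balanced (P Q : pred T) :
  \sum_(b | P b) f b = \sum_(b | Q b) f b ->
  \sum_(b | P b) (odd (f b) && up b) + \sum_(b | Q b) (odd (f b) && ~~ up b) =
  \sum_(b | Q b) (odd (f b) && up b) + \sum_(b | P b) (odd (f b) && ~~ up b) ->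
  \sum_(b | P b) halve b = \sum_(b | Q b) halve b.
Proof.
move=> Ef Eodd; have := double_sum_halve P; have := double_sum_halve Q; lia.
Qed.

End Halving.

Lemma sum_mem_uniq (T : finType) (Q : pred T) (P : seq T) : uniq P ->
  \sum_(a | Q a) ((a \in P) : nat) = count Q P.
Proof.
move=> uP; rewrite sum_nat_cond_swap -big_uniq // -sum1_count [RHS]big_mkcond.
by apply: eq_bigr => a _; case: (Q a).
Qed.

Lemma not_uniq_perm_dup (T : eqType) (D : seq T) :
  ~~ uniq D -> exists g R, perm_eq D [:: g, g & R].
Proof.
elim: D => [//|x D IH] /=; rewrite negb_and negbK.
case: (boolP (x \in D)) => [xD _|_ /= /IH[g [R DR]]].
  by exists x, (rem x D); rewrite perm_cons perm_to_rem.
exists g, (x :: R); apply: (@perm_trans _ (x :: [:: g, g & R])); first by rewrite perm_cons.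
by rewrite -[x :: _]/([:: x] ++ [:: g; g] ++ R) perm_catCA.
Qed.

Section UniqDecomposition.
Variables (T : finType) (P : {ffun T -> nat} -> Prop) (B : T -> nat).
Hypothesis P_double :
  forall g, P g -> (forall a, g a + g a <= B a) -> P [ffun a => g a + g a].

Lemma uniq_decomposition (D : seq {ffun T -> nat}) :
  (forall g, g \in D -> P g) -> (forall a, \sum_(g <- D) g a <= B a) ->
  exists2 D', uniq D' & [/\ forall g, g \in D' -> P g,
    forall a, \sum_(g <- D') g a = \sum_(g <- D) g a & size D' <= size D].
Proof.
move: {2}(size D).+1 (ltnSn (size D)) => n; elim: n D => // n IH D sizeD PD DB.
have [uD|/not_uniq_perm_dup[g [R DR]]] := boolP (uniq D); first by exists D.
have sumD a : \sum_(x <- D) x a = g a + g a + \sum_(x <- R) x a.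
  by rewrite (perm_big _ DR) /= !big_cons addnA.
have PR x : x \in R -> P x by move=> xR; apply: PD; rewrite (perm_mem DR) !inE xR !orbT.
have Pg : P g by apply: PD; rewrite (perm_mem DR) mem_head.
pose D2 := [ffun a => g a + g a] :: R.
have sumD2 a : \sum_(x <- D2) x a = \sum_(x <- D) x a by rewrite big_cons ffunE sumD.
have sizeD2 : size D2 < size D by rewrite (perm_size DR).
have PD2 x : x \in D2 -> P x.
  rewrite inE => /predU1P[->|/PR //]; apply: P_double Pg _ => a.
  by apply: leq_trans (DB a); rewrite sumD leq_addr.
have D2B a : \sum_(x <- D2) x a <= B a by rewrite sumD2.
have [D' uD' [PD' sumD' sizeD']] := IH D2 (leq_trans sizeD2 sizeD) PD2 D2B.
exists D' => //; split=> // [a|]; first by rewrite sumD' sumD2.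
exact: leq_trans sizeD' (ltnW sizeD2).
Qed.
End UniqDecomposition.

Section SkewSymmetry.
Variable G : skew_graph.
Local Notation V := (sg_V G).
Local Notation E := (sg_E G).
Local Notation hd := (@Defs.head G).
Implicit Types (v w : V) (a b : E) (s : V) (h : E -> nat) (P : seq E).

Lemma sigV_inj : injective (@sigV G). Proof. exact: can_inj (@sigV_invol G). Qed.
Lemma sigE_inj : injective (@sigE G). Proof. exact: can_inj (@sigE_invol G). Qed.

Lemma sigV_eq v w : (sigV v == w) = (v == sigV w).
Proof. by rewrite -{1}(sigV_invol w) (inj_eq sigV_inj). Qed.

Lemma sum_sigE (P : pred E) (F : E -> nat) :
  \sum_(a | P a) F a = \sum_(a | P (sigE a)) F (sigE a).
Proof. exact: reindex_inj sigE_inj. Qed.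

Definition conservative s h := forall v, v != s -> v != sigV s ->
  \sum_(a | tail a == v) h a = \sum_(a | hd a == v) h a.

Lemma conservative_sigE s h : conservative s h -> conservative s (h \o @sigE G).
Proof.
move=> hc v vs vs'; rewrite sum_sigE [RHS]sum_sigE /=.
under eq_bigr do rewrite sigE_invol; under [RHS]eq_bigr do rewrite sigE_invol.
under eq_bigl do rewrite tail_sigE sigV_eq; under [RHS]eq_bigl do rewrite head_sigE sigV_eq.
by symmetry; apply: hc; rewrite ?(inj_eq sigV_inj) // sigV_eq.
Qed.

Lemma conservativeD s h1 h2 :
  conservative s h1 -> conservative s h2 -> conservative s (fun a => h1 a + h2 a).
Proof. by move=> c1 c2 v vs vs'; rewrite !big_split /= c1 // c2. Qed.

Lemma conservativeM s h d : conservative s h -> conservative s (fun a => d * h a).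
Proof. by move=> c v vs vs'; rewrite -!big_distrr /= c. Qed.

Lemma conservativeB s h1 h2 : (forall a, h2 a <= h1 a) ->
  conservative s h1 -> conservative s h2 -> conservative s (fun a => h1 a - h2 a).
Proof.
move=> le21 c1 c2 v vs vs'.
have sumB (P : pred E) :
    \sum_(a | P a) (h1 a - h2 a) + \sum_(a | P a) h2 a = \sum_(a | P a) h1 a.
  by rewrite -big_split; apply: eq_bigr => a _ /=; rewrite subnK ?le21.
by apply: (@addIn (\sum_(a | tail a == v) h2 a)); rewrite sumB c2 // sumB c1.
Qed.

Definition vpair v : {set V} := [set v; sigV v].

Lemma vpair_eq w v : (vpair w == vpair v) = (w == v) || (w == sigV v).
Proof.
apply/eqP/orP => [/setP/(_ w)|[]/eqP ->]; last by rewrite /vpair setUC sigV_invol.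
- by rewrite !inE eqxx => /esym/orP.
- by [].
Qed.

Lemma vpair_eqn w v : ((vpair w == vpair v) : nat) = (w == v) + (w == sigV v).
Proof.
rewrite vpair_eq; have [->|//] := eqVneq w v.
by rewrite eq_sym (negbTE (sigV_nofix v)).
Qed.

Definition arc_rep a := enum_rank a < enum_rank (sigE a).

Lemma arc_rep_sigE a : arc_rep (sigE a) = ~~ arc_rep a.
Proof.
rewrite /arc_rep sigE_invol -leqNgt ltn_neqAle; apply: andb_idl => _.
by apply: contra (sigE_nofix a) => /eqP/val_inj/enum_rank_inj ->.
Qed.

Lemma sum_odd_arc_rep h (F : E -> nat) : symmetric_fun h ->
  \sum_(b | odd (h b)) F b = \sum_(l | odd (h l) && arc_rep l) (F l + F (sigE l)).
Proof.
move=> hsym; rewrite (bigID arc_rep) /= [X in _ + X]sum_sigE big_split /=.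
by congr (_ + _); apply: eq_bigl => b; rewrite hsym arc_rep_sigE negbK.
Qed.

Lemma odd_arcs_even_at s f v : conservative s f -> v != s -> v != sigV s ->
  ~~ odd (\sum_(b | odd (f b)) ((tail b == v) + (hd b == v))).
Proof.
move=> fc vs vs'; rewrite big_split /= !(sum_nat_cond_swap (fun b => odd (f b))).
by rewrite oddD -!(odd_sum _ f) fc // addbb.
Qed.

Definition round_up (o : E -> bool) b := if arc_rep b then o b else ~~ o (sigE b).

Lemma round_up_sigE o b : round_up o (sigE b) = ~~ round_up o b.
Proof. by rewrite /round_up arc_rep_sigE sigE_invol; case: (arc_rep b); rewrite ?negbK. Qed.

Section HalfFlow.
Variables (s : V) (f : E -> nat).
Hypotheses (fsym : symmetric_fun f) (fc : conservative s f).

(* The auxiliary multigraph on the pairs [{v, sigV v}] whose edges are the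
   odd arcs, one arc [l] chosen from each pair [{l, sigE l}]. *)
Let A := [set l | odd (f l) && arc_rep l].
Let S (c : {set V}) := c == vpair s.

Lemma sum_odd_reps (F : E -> nat) :
  \sum_(l in A) (F l + F (sigE l)) = \sum_(b | odd (f b)) F b.
Proof. by rewrite (sum_odd_arc_rep _ fsym); apply: eq_bigl => l; rewrite inE. Qed.

Lemma even_degrees_vpair :
  even_degrees S A (fun l => vpair (tail l)) (fun l => vpair (hd l)).
Proof.
move=> c Sc; case: (pickP (fun v => c == vpair v)) => [v /eqP cv|none]; last first.
  by rewrite /degree big1 // => l _; rewrite !(eq_sym _ c) !none.
have [vs vs'] : v != s /\ v != sigV s.
  by move: Sc; rewrite /S cv vpair_eq negb_or => /andP.
suff -> : degree A (fun l => vpair (tail l)) (fun l => vpair (hd l)) c =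
          \sum_(b | odd (f b)) ((tail b == v) + (hd b == v)).
  exact: odd_arcs_even_at fc vs vs'.
rewrite /degree cv -sum_odd_reps; apply: eq_bigr => l _.
by rewrite !vpair_eqn tail_sigE head_sigE !sigV_eq; lia.
Qed.

Lemma orient_vpair_count o (p q : E -> V) v :
    (forall l, p (sigE l) = sigV (q l)) -> (forall l, q (sigE l) = sigV (p l)) ->
  \sum_(l in A) (orient (fun l => vpair (p l)) (fun l => vpair (q l)) o l == vpair v) =
  \sum_(b | p b == v) (odd (f b) && round_up o b) +
  \sum_(b | q b == v) (odd (f b) && ~~ round_up o b).
Proof.
move=> pq qp; set up := round_up o.
transitivity (\sum_(b | odd (f b)) ((up b && (p b == v)) + (~~ up b && (q b == v)))).
  rewrite -sum_odd_reps; apply: eq_bigr => l; rewrite inE => /andP[_ rep].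
  rewrite /up round_up_sigE /round_up rep pq qp !sigV_eq /orient.
  by case: (o l); rewrite vpair_eqn /=; lia.
rewrite big_split /=; congr (_ + _); rewrite big_mkcond [RHS]big_mkcond;
  apply: eq_bigr => b _; case: (odd (f b)); case: (up b) => //=; by case: (_ == v).
Qed.

Lemma exists_half_flow :
  exists h, (forall a, h a + h (sigE a) = f a) /\ conservative s h.
Proof.
have [o bal] := balanced_orientation even_degrees_vpair.
exists (halve f (round_up o)); split.
  move=> a; rewrite /halve fsym round_up_sigE.
  by have := odd_double_half (f a); case: (odd _); case: (round_up o a) => /=; lia.
move=> v vs vs'; apply: halve_balanced; first exact: fc.
have Sv : ~~ S (vpair v) by rewrite /S vpair_eq negb_or vs vs'.
by have := bal _ Sv; rewrite !orient_vpair_count // => l; rewrite ?tail_sigE ?head_sigE.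
Qed.

End HalfFlow.

Definition support_rel h : rel V :=
  fun v w => [exists a, (0 < h a) && (tail a == v) && (hd a == w)].

Lemma support_rel_arc h a : 0 < h a -> support_rel h (tail a) (hd a).
Proof. by move=> ha; apply/existsP; exists a; rewrite ha !eqxx. Qed.

(* The arcs realising a [support_rel h]-path; the default arc [d] is never used. *)
Fixpoint path_arcs h (d : E) v (p : seq V) : seq E :=
  if p is w :: p' then
    odflt d [pick a | (0 < h a) && (tail a == v) && (hd a == w)] :: path_arcs h d w p'
  else [::].

Lemma path_arcsP h d v p : path (support_rel h) v p ->
  [/\ walk v (path_arcs h d v p), map hd (path_arcs h d v p) = p
    & all (fun a => 0 < h a) (path_arcs h d v p)].
Proof.
elim: p v => [|w p IH] v //= /andP[/existsP[a0 ha0] Pp].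
have [W M Al] := IH _ Pp.
case: pickP => [a /andP[/andP[ha ta] /eqP ha_w]|/(_ a0)]; last by rewrite ha0.
by rewrite /= ta ha ha_w W M Al.
Qed.

Lemma connect_simple_path h (d : E) v w : connect (support_rel h) v w ->
  exists2 P, simple_path v w P & all (fun a => 0 < h a) P.
Proof.
case/connectP=> p /shortenP[p' p'P up' _ ->].
have [W M Al] := path_arcsP d p'P.
by exists (path_arcs h d v p'); rewrite // /simple_path W M eqxx up'.
Qed.

Lemma conservative_cut s h (A : {set V}) :
  conservative s h -> s \notin A -> sigV s \notin A ->
  \sum_(a | (tail a \in A) && (hd a \notin A)) h a =
  \sum_(a | (hd a \in A) && (tail a \notin A)) h a.
Proof.
move=> hc sA s'A.
have inside : \sum_(a | tail a \in A) h a = \sum_(a | hd a \in A) h a.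
  rewrite (partition_big (@tail G) (mem A)) ?[RHS](partition_big hd (mem A)) //.
  apply: eq_bigr => v vA.
  have drop_in (p : E -> V) : \sum_(a | (p a \in A) && (p a == v)) h a =
                             \sum_(a | p a == v) h a.
    by apply: eq_bigl => a; rewrite andb_idl // => /eqP ->.
  by rewrite !drop_in hc //; apply: contraTneq vA => ->.
move: inside; rewrite (bigID (fun a => hd a \in A)) [RHS](bigID (fun a => tail a \in A)) /=.
by under eq_bigl do rewrite andbC; move/addnI.
Qed.

Lemma conservative_cut_eq0 s h (A : {set V}) :
  conservative s h -> s \notin A -> sigV s \notin A ->
  [forall (a | (tail a \in A) && (hd a \notin A)), h a == 0] =
  [forall (a | (hd a \in A) && (tail a \notin A)), h a == 0].
Proof. by move=> hc sA s'A; rewrite -!sum_nat_eq0 (conservative_cut hc). Qed.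

Section ReachTerminal.
Variables (s : V) (h : E -> nat) (A : {set V}) (a0 : E).
Hypotheses (hc : conservative s h) (ha0 : 0 < h a0).

Lemma forward_closed_terminal : hd a0 \in A -> tail a0 \notin A ->
  (forall a, 0 < h a -> tail a \in A -> hd a \in A) -> (s \in A) || (sigV s \in A).
Proof.
move=> hA tA closed; apply/norP => -[sA s'A].
suff : [forall (a | (tail a \in A) && (hd a \notin A)), h a == 0].
  rewrite (conservative_cut_eq0 hc) // => /forall_inP/(_ a0).
  by rewrite hA tA -leqn0 leqNgt ha0 => /(_ isT).
apply/forall_inP => a /andP[ta]; rewrite -leqn0 leqNgt.
by apply: contra => /closed/(_ ta).
Qed.

Lemma backward_closed_terminal : tail a0 \in A -> hd a0 \notin A ->
  (forall a, 0 < h a -> hd a \in A -> tail a \in A) -> (s \in A) || (sigV s \in A).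
Proof.
move=> tA hA closed; apply/norP => -[sA s'A].
suff : [forall (a | (hd a \in A) && (tail a \notin A)), h a == 0].
  rewrite -(conservative_cut_eq0 hc) // => /forall_inP/(_ a0).
  by rewrite hA tA -leqn0 leqNgt ha0 => /(_ isT).
apply/forall_inP => a /andP[ha]; rewrite -leqn0 leqNgt.
by apply: contra => /closed/(_ ha).
Qed.

End ReachTerminal.

Definition elementary_path s (P : seq E) :=
  simple_cycle P \/ simple_path s (sigV s) P \/ simple_path (sigV s) s P.

(* The vertices reachable from the head of [a0] (resp. reaching its tail) must
   contain a terminal, otherwise the cut they span would carry flow one way only. *)
Lemma positive_arc_elementary_path s h a0 : conservative s h -> 0 < h a0 ->
  exists2 P, elementary_path s P & all (fun a => 0 < h a) P.
Proof.
move=> hc ha0; set e := support_rel h.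
have e0 : e (tail a0) (hd a0) := support_rel_arc ha0.
have [cyc|ncyc] := boolP (connect e (hd a0) (tail a0)).
  case/connectP: cyc => p /shortenP[p' p'P up' _] p'l.
  have [W M Al] := path_arcsP a0 p'P.
  exists (a0 :: path_arcs h a0 (hd a0) p'); last by rewrite /= ha0 Al.
  by left; rewrite /simple_cycle /= eqxx W /= M -p'l eqxx.
have fwd : (s \in [set t | connect e (hd a0) t]) ||
           (sigV s \in [set t | connect e (hd a0) t]).
  apply: (forward_closed_terminal hc ha0); rewrite ?inE ?connect0 //.
  by move=> a ha; rewrite !inE => /connect_trans; apply; apply/connect1/support_rel_arc.
have bwd : (s \in [set t | connect e t (tail a0)]) ||
           (sigV s \in [set t | connect e t (tail a0)]).
  apply: (backward_closed_terminal hc ha0); rewrite ?inE ?connect0 //.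
  by move=> a ha; rewrite !inE; apply/connect_trans/connect1/support_rel_arc.
have through t t' : connect e (hd a0) t -> connect e t' (tail a0) ->
    t != t' /\ connect e t' t.
  move=> ht ht'; split; first by apply: contraNneq ncyc => tt; rewrite (connect_trans ht) ?tt.
  exact: connect_trans (connect_trans ht' (connect1 e0)) ht.
rewrite !inE in fwd bwd.
case/orP: fwd => F; case/orP: bwd => B; have [neq conn] := through _ _ F B.
- by rewrite eqxx in neq.
- by have [P ? ?] := connect_simple_path a0 conn; exists P; do 2?right.
- by have [P ? ?] := connect_simple_path a0 conn; exists P; [right; left|].
- by rewrite eqxx in neq.
Qed.

Lemma chi_sig_path P a : chi (sig_path P) a = chi P (sigE a).
Proof. by rewrite /chi /sig_path mem_rev -{1}(sigE_invol a) (mem_map sigE_inj). Qed.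

Lemma walk_count v w P : walk w P ->
  count (fun a => tail a == v) P + (last w (map hd P) == v) =
  count (fun a => hd a == v) P + (w == v).
Proof.
elim: P w => [|a P IH] w //= /andP[/eqP ta W].
by have := IH _ W; rewrite ta; lia.
Qed.

Lemma elementary_path_uniq s P : elementary_path s P -> uniq P.
Proof.
case=> [|[]]; last 2 first.
- by case/and3P => _ _ /andP[_ /map_uniq].
- by case/and3P => _ _ /andP[_ /map_uniq].
by case: P => // a P /and3P[_ _ /map_uniq].
Qed.

Lemma conservative_chi s P : elementary_path s P -> conservative s (chi P).
Proof.
move=> eP v vs vs'; rewrite /chi !sum_mem_uniq ?(elementary_path_uniq eP) //.
case: eP => [|[]].
- case: P => // a P /and3P[W /eqP L _].
  by have := walk_count v W; rewrite L => /addIn.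
- case/and3P => W /eqP L _; have := walk_count v W.
  by rewrite L !(eq_sym _ v) (negbTE vs) (negbTE vs') !addn0.
- case/and3P => W /eqP L _; have := walk_count v W.
  by rewrite L !(eq_sym _ v) (negbTE vs) (negbTE vs') !addn0.
Qed.

Lemma eq_conservative s h1 h2 : h1 =1 h2 -> conservative s h1 -> conservative s h2.
Proof. by move=> E12 c1 v vs vs'; rewrite -!(eq_bigr _ (fun a _ => E12 a)) c1. Qed.

Section Elementary.
Variables (u : E -> nat) (s : V).

Lemma elementary_flowP (g : {ffun E -> nat}) d P :
  elementary_path s P -> 0 < d ->
  (forall a, g a = d * chi P a + d * chi (sig_path P) a) -> (forall a, g a <= u a) ->
  elementary_flow u s g.
Proof.
move=> eP dpos gE gu; exists d, P; do !split => //.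
- apply: eq_conservative (fun a => esym (gE a)) _.
  apply/conservativeD/conservativeM; first exact/conservativeM/conservative_chi.
  apply: eq_conservative (fun a => esym (chi_sig_path P a)) _.
  exact/conservative_sigE/conservative_chi.
- by move=> a; rewrite !gE !chi_sig_path sigE_invol addnC.
Qed.

Lemma elementary_flow_double (g : {ffun E -> nat}) :
  elementary_flow u s g -> (forall a, g a + g a <= u a) ->
  elementary_flow u s [ffun a => g a + g a].
Proof.
case=> d [P [dpos [eP [gE _]]]] gu.
apply: (elementary_flowP (d := d + d) eP); rewrite ?addn_gt0 ?dpos // => a.
  by rewrite ffunE gE !mulnDl; lia.
by rewrite ffunE.
Qed.

Lemma elementary_path_nil : ~ elementary_path s [::].
Proof.
move: (sigV_nofix s) => nofix [//|[]] /and3P[_ /= L _]; by rewrite ?L // eq_sym L in nofix.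
Qed.

Lemma peel_elementary_flow h a0 :
  conservative s h -> (forall a, h a + h (sigE a) <= u a) -> 0 < h a0 ->
  exists (g : {ffun E -> nat}) h',
    [/\ elementary_flow u s g, conservative s h',
        forall a, h a + h (sigE a) = g a + (h' a + h' (sigE a)),
        forall a, h' a <= h a
      & #|[set a | 0 < h' a]| < #|[set a | 0 < h a]|].
Proof.
move=> hc hu ha0; have [P eP /allP Ppos] := positive_arc_elementary_path hc ha0.
have [a1 a1P] : exists a1, a1 \in P.
  by case: P eP {Ppos} => [/elementary_path_nil|a1 P _] //; exists a1; rewrite mem_head.
have [am amP hmin] := arg_minnP h a1P; have {}amP : am \in P := amP.
set d := h am; have dpos : 0 < d := Ppos _ amP.
have dh a : d * chi P a <= h a.
  by rewrite /chi; case: (boolP (a \in P)) => [/hmin|_]; rewrite ?muln1 ?muln0.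
exists [ffun a => d * chi P a + d * chi (sig_path P) a], (fun a => h a - d * chi P a).
have hE a : h a = h a - d * chi P a + d * chi P a by rewrite subnK.
split=> [||a|a|].
- apply: elementary_flowP eP dpos _ _ => a; rewrite ffunE //.
  by rewrite chi_sig_path; apply: leq_trans (hu a); rewrite leq_add.
- by apply: conservativeB => //; apply/conservativeM/conservative_chi.
- by rewrite ffunE chi_sig_path {1}(hE a) {1}(hE (sigE a)); lia.
- exact: leq_subr.
rewrite [X in _ < X](cardsD1 am) inE dpos ltnS.
apply/subset_leq_card/subsetP => a; rewrite !inE => ha'.
rewrite (leq_trans ha' (leq_subr _ _)) andbT.
by apply: contraTneq ha' => ->; rewrite /chi amP muln1 subnn.
Qed.

Lemma conservative_decomposition h :
  conservative s h -> (forall a, h a + h (sigE a) <= u a) ->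
  exists2 D : seq {ffun E -> nat}, (forall g, g \in D -> elementary_flow u s g) &
    (forall a, h a + h (sigE a) = \sum_(g <- D) g a) /\ size D <= #|[set a | 0 < h a]|.
Proof.
move: {2}#|_|.+1 (ltnSn #|[set a | 0 < h a]|) => n; elim: n h => // n IH h supp hc hu.
case: (pickP (fun a => 0 < h a)) => [a0 ha0|none]; last first.
  exists [::] => //; split=> // a; rewrite big_nil.
  by move: (none a) (none (sigE a)); rewrite /= !lt0n => /negbFE/eqP -> /negbFE/eqP ->.
have [g [h' [eg hc' hE h'h lt]]] := peel_elementary_flow hc hu ha0.
have hu' a : h' a + h' (sigE a) <= u a by apply: leq_trans (hu a); rewrite leq_add.
have [D' eD' [sumD' sizeD']] := IH h' (leq_trans lt supp) hc' hu'.
exists (g :: D') => [x|]; first by rewrite inE => /predU1P[->|/eD'].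
by split=> [a|]; rewrite ?big_cons -?sumD' // (leq_ltn_trans sizeD' lt).
Qed.

End Elementary.

End SkewSymmetry.

Theorem mainTheorem2 (G : skew_graph) (u : sg_E G -> nat)
  (hu : symmetric_fun u) (s : sg_V G) (f : sg_E G -> nat)
  (hf : is_ISflow u s f) :
  exists D : seq {ffun sg_E G -> nat},
    [/\ uniq D,
        (forall g, g \in D -> elementary_flow u s g),
        (forall a, f a = \sum_(g <- D) g a)
      & size D <= #|sg_E G|].
Proof.
case: hf => [[fu fc] fsym].
have [h [hf hc]] := exists_half_flow fsym fc.
have hu' a : h a + h (sigE a) <= u a by rewrite hf.
have [D eD [sumD sizeD]] := conservative_decomposition hc hu'.
have DB a : \sum_(g <- D) g a <= u a by rewrite -sumD hf.
have [D' uD' [eD' sumD' sizeD']] :=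
  uniq_decomposition (@elementary_flow_double _ u s) eD DB.
exists D'; split=> // [a|]; first by rewrite sumD' -sumD hf.
by rewrite (leq_trans sizeD') // (leq_trans sizeD) // max_card.
Qed.
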